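(* Let $M$ be a right $R$-module such that every submodule $N$ of $M$ can be written as $N=X+A$ with $X$ a cyclic submodule of $M$ and $A\ll M$. Then $M$ is principally Goldie*-lifting if and only if $M$ is Goldie*-lifting.
   Context: $R$ is an associative ring with identity; modules are unital right $R$-modules. $K\ll M$ means $K$ is small in $M$. For submodules $X,Y$ of $M$, $X\,\beta^*\,Y$ means $(X+Y)/X\ll M/X$ and $(X+Y)/Y\ll M/Y$. $M$ is Goldie*-lifting if for every submodule $X$ of $M$ there is a direct summand $D$ of $M$ with $X\,\beta^*\,D$; $M$ is principally Goldie*-lifting if this holds for every cyclic submodule $X$. *)

From HB Require Import structures.
From mathcomp Require Import all_boot all_order all_algebra.
Set Implicit Arguments. Unset Strict Implicit. Unset Printing Implicit Defensive.
Import GRing.Theory.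
Local Open Scope ring_scope.

(* A unital right R-module is modelled as a left module over the converse
   ring [converse R]: for m : M and r : R, the right action m r is [r *: m]. *)

Section ModuleDefs.
Variable R : nzRingType.
Variable M : lmodType R^c.

Definition subm_sub (X Y : M -> Prop) : Prop := forall x, X x -> Y x.
Definition subm_eq (X Y : M -> Prop) : Prop := forall x, X x <-> Y x.
Definition is_whole (X : M -> Prop) : Prop := forall x, X x.
Definition is_zero (X : M -> Prop) : Prop := forall x, X x -> x = 0.

Definition submodule (X : M -> Prop) : Prop :=
  [/\ X 0,
      (forall x y, X x -> X y -> X (x + y)) &
      (forall (r : R^c) x, X x -> X (r *: x))].

Definition subm_add (X Y : M -> Prop) : M -> Prop :=
  fun z => exists x y, [/\ X x, Y y & z = x + y].

Definition subm_cap (X Y : M -> Prop) : M -> Prop := fun z => X z /\ Y z.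

Definition cyclic_sub (X : M -> Prop) : Prop :=
  exists m : M, subm_eq X (fun z => exists r : R^c, z = r *: m).

Definition small (K : M -> Prop) : Prop :=
  submodule K /\
  forall L, submodule L -> is_whole (subm_add K L) -> is_whole L.

(* For submodules X and K of M with X <= K:  K/X << M/X.  Via the
   correspondence between submodules of M/X and submodules of M containing X:
   for every submodule L of M with X <= L, K + L = M implies L = M. *)
Definition small_quot (X K : M -> Prop) : Prop :=
  forall L, submodule L -> subm_sub X L -> is_whole (subm_add K L) -> is_whole L.

Definition beta_star (X Y : M -> Prop) : Prop :=
  small_quot X (subm_add X Y) /\ small_quot Y (subm_add X Y).

Definition direct_summand (D : M -> Prop) : Prop :=
  submodule D /\
  exists D', [/\ submodule D', is_whole (subm_add D D') & is_zero (subm_cap D D')].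

Definition goldie_star_lifting : Prop :=
  forall X, submodule X -> exists D, direct_summand D /\ beta_star X D.

Definition principally_goldie_star_lifting : Prop :=
  forall X, submodule X -> cyclic_sub X -> exists D, direct_summand D /\ beta_star X D.

End ModuleDefs.

From HB Require Import structures.
From mathcomp Require Import all_boot all_order all_algebra.
Set Implicit Arguments. Unset Strict Implicit. Unset Printing Implicit Defensive.
Import GRing.Theory.
Local Open Scope ring_scope.

(* Write N = X + A with X cyclic and A small, and pick a summand D with
   X beta* D.  Then N beta* D as well: N/X is small in M/X, so enlarging X to
   N keeps (N + D)/N small in M/N; and since A is small it can be absorbed into
   any supplement, so (N + D)/D is still small in M/D. *)

Section BetaStarSmallPerturbation.
Variable R : nzRingType.
Variable M : lmodType R^c.
Implicit Types X Y N A D L : M -> Prop.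

Lemma submodule_add X Y :
  submodule X -> submodule Y -> submodule (subm_add X Y).
Proof.
move=> [X0 XD XZ] [Y0 YD YZ]; split.
- by exists 0, 0; rewrite addr0.
- move=> _ _ [x1 [y1 [Xx1 Yy1 ->]]] [x2 [y2 [Xx2 Yy2 ->]]].
  by exists (x1 + x2), (y1 + y2); split; [exact: XD|exact: YD|rewrite addrACA].
- move=> r _ [x [y [Xx Yy ->]]].
  by exists (r *: x), (r *: y); split; [exact: XZ|exact: YZ|rewrite scalerDr].
Qed.

Lemma subm_add_subl X Y : submodule Y -> subm_sub X (subm_add X Y).
Proof. by move=> [Y0 _ _] x Xx; exists x, 0; rewrite addr0. Qed.

Lemma small_whole_addr A L :
  small A -> submodule L -> is_whole (subm_add L A) -> is_whole L.
Proof.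
move=> [_ smallA] sL wLA; apply: smallA => // m.
by have [l [a [Ll Aa ->]]] := wLA m; exists a, l; rewrite addrC.
Qed.

Lemma small_quot_add_sup X Y D :
  submodule X -> subm_sub X Y ->
  small_quot X (subm_add X D) -> small_quot Y (subm_add Y D).
Proof.
move=> [X0 _ _] XY bXD L sL YL wL; apply: bXD => // [x /XY/YL //|m].
have [_ [l [[y [d [Yy Dd ->]]] Ll ->]]] := wL m.
exists (0 + d), (y + l); split; first by exists 0, d.
  by case: sL => _ LD _; apply: LD => //; apply: YL.
by rewrite add0r addrCA addrA.
Qed.

Lemma small_quot_add_small X N A D :
  small A -> subm_sub N (subm_add X A) ->
  small_quot D (subm_add X D) -> small_quot D (subm_add N D).
Proof.
move=> smA NXA bXD L sL DL wL.
have sA : submodule A by case: smA.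
apply: (small_whole_addr smA) => //.
apply: bXD => [|d Dd|m]; first exact: submodule_add.
  exact/subm_add_subl/DL.
have [_ [l [[n [d [Nn Dd ->]]] Ll ->]]] := wL m.
have [x [a [Xx Aa ->]]] := NXA n Nn.
exists (x + d), (l + a); split; [by exists x, d|by exists l, a|].
by rewrite -!addrA; congr (_ + _); rewrite addrCA [a + _]addrC addrCA.
Qed.

Lemma beta_star_add_small X N A D :
  submodule X -> small A -> subm_sub X N -> subm_sub N (subm_add X A) ->
  beta_star X D -> beta_star N D.
Proof.
move=> sX smA XN NXA [bX bD]; split.
- exact: small_quot_add_sup sX XN bX.
- exact: small_quot_add_small smA NXA bD.
Qed.

End BetaStarSmallPerturbation.

Theorem proposition3p19 (R : nzRingType) (M : lmodType R^c)
  (hM : forall N : M -> Prop, submodule N ->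
          exists X A : M -> Prop,
            [/\ submodule X, cyclic_sub X, small A & subm_eq N (subm_add X A)]) :
  principally_goldie_star_lifting M <-> goldie_star_lifting M.
Proof.
split=> [pgsl N sN|gsl X sX _]; last exact: gsl.
have [X [A [sX cX smA eN]]] := hM N sN.
have [D [dD bXD]] := pgsl X sX cX.
exists D; split=> //; apply: (beta_star_add_small sX smA) bXD => [x Xx|x /eN //].
by apply/eN/subm_add_subl => //; case: smA.
Qed.
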